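(* Let $\{\alpha_{i,j,k}\}_{1\le i,j,k\le d}$ be real numbers invariant under all permutations of the three indices, and suppose the system $\frac{\partial\varphi}{\partial t_i}=\sum_{j,k}\alpha_{i,j,k}t_j\frac{\partial\varphi}{\partial t_k}+t_i\varphi$ ($i=1,\dots,d$) has a $C^2$ solution $\varphi$ on a neighborhood of $\mathbf 0\in\mathbb R^d$ with $\varphi(\mathbf 0)\neq0$. Let $A_k:=(\alpha_{k,r,s})_{1\le r,s\le d}$, $C_{i,j}:=A_iA_j-A_jA_i$, and $F(\mathbf t):=\sum_{i,j,k}\alpha_{i,j,k}t_it_jt_k$. Then for all $i,j\in\{1,\dots,d\}$ and every $\xi\in\mathbb R^d$, the function $s\mapsto F(\mathbf t(s,\xi))$ is constant on $\mathbb R$, where $\mathbf t(s,\xi):=\exp(sC_{i,j})\xi$ is the solution of $\frac{d}{ds}\mathbf t(s,\xi)=C_{i,j}\mathbf t(s,\xi)$, $\mathbf t(0,\xi)=\xi$. *)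

From HB Require Import structures.
From mathcomp Require Import all_boot all_order all_algebra.
From mathcomp Require Import all_classical all_reals all_analysis.
Set Implicit Arguments. Unset Strict Implicit. Unset Printing Implicit Defensive.
Import Order.TTheory GRing.Theory Num.Theory.
Import numFieldNormedType.Exports.
Local Open Scope classical_set_scope.
Local Open Scope ring_scope.

Definition ebasis {R : realType} {d : nat} (i : 'I_d) : 'cV[R]_d := delta_mx i 0.

Definition partial {R : realType} {d : nat} (f : 'cV[R]_d -> R) (i : 'I_d)
  (x : 'cV[R]_d) : R := 'D_(ebasis i) f x.

Definition C2_on {R : realType} {d : nat} (U : set 'cV[R]_d) (f : 'cV[R]_d -> R) : Prop :=
  forall x, U x ->
    [/\ {for x, continuous f},
        (forall i, derivable f x (ebasis i)),
        (forall i, {for x, continuous (partial f i)}),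
        (forall i j, derivable (partial f i) x (ebasis j)) &
        (forall i j, {for x, continuous (partial (partial f i) j)})].

Definition Amat {R : realType} {d : nat} (alpha : 'I_d -> 'I_d -> 'I_d -> R)
  (k : 'I_d) : 'M[R]_d := \matrix_(r, s) alpha k r s.

Definition Cmat {R : realType} {d : nat} (alpha : 'I_d -> 'I_d -> 'I_d -> R)
  (i j : 'I_d) : 'M[R]_d := Amat alpha i *m Amat alpha j - Amat alpha j *m Amat alpha i.

Definition Fcubic {R : realType} {d : nat} (alpha : 'I_d -> 'I_d -> 'I_d -> R)
  (t : 'cV[R]_d) : R :=
  \sum_(i < d) \sum_(j < d) \sum_(k < d) alpha i j k * t i 0 * t j 0 * t k 0.

From HB Require Import structures.
From mathcomp Require Import all_boot all_order all_algebra.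
From mathcomp Require Import all_classical all_reals all_analysis.
From mathcomp Require Import ring lra.
Import Order.TTheory GRing.Theory Num.Theory.
Import numFieldNormedType.Exports.
Local Open Scope classical_set_scope.
Local Open Scope ring_scope.
Set Implicit Arguments. Unset Strict Implicit. Unset Printing Implicit Defensive.

(* Write [p] for the gradient of [phi] and [A(t) = \sum_k t_k A_k], a symmetric matrix.
   The system reads [p = A(t) p + phi t]; differentiating it once, the Hessian [X]
   satisfies [X = A(p) + A(t) X + phi 1 + t p^T], and the symmetry of [X] forces [A(t)]
   to commute with [phi A(p)].  Along a ray [t = s x] with [s != 0], substituting
   [p = s (A(x) p + phi x)] twice and letting [s] go to [0] (where [p = 0] and
   [phi != 0]) gives [A(x) A(A(x) x) = A(A(x) x) A(x)] for every [x].  Finally the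
   derivative of [F] along the flow of [C_ij] is [3 (C_ij t) . A(t) t], which by the
   symmetry of [alpha] is the [(i, j)] entry of [-3 [A(t), A(A(t) t)]], hence zero. *)

Lemma mxentryD (V : nmodType) m n (M N : 'M[V]_(m, n)) i j :
  (M + N) i j = M i j + N i j.
Proof. by rewrite !mxE. Qed.

Lemma mxentryB (V : zmodType) m n (M N : 'M[V]_(m, n)) i j :
  (M - N) i j = M i j - N i j.
Proof. by rewrite !mxE. Qed.

Lemma mxentryZ (R : pzRingType) m n (c : R) (M : 'M[R]_(m, n)) i j :
  (c *: M) i j = c * M i j.
Proof. by rewrite !mxE. Qed.

Section comm_mx_closure.
Variables (R : comPzRingType) (n : nat).
Implicit Types A B C : 'M[R]_n.

Lemma comm_mxZ A B c : comm_mx A B -> comm_mx A (c *: B).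
Proof. by rewrite /comm_mx -scalemxAl -scalemxAr => ->. Qed.

Lemma comm_mxN A B : comm_mx A B -> comm_mx A (- B).
Proof. by rewrite /comm_mx mulmxN mulNmx => ->. Qed.

Lemma comm_mxDK A B C : comm_mx A C -> comm_mx A (B + C) -> comm_mx A B.
Proof. by move=> /comm_mxN AC /comm_mxD /(_ AC); rewrite addrK. Qed.

End comm_mx_closure.

Lemma comm_mxZK (F : fieldType) n (A B : 'M[F]_n) c :
  c != 0 -> comm_mx A (c *: B) -> comm_mx A B.
Proof. by move=> c0 /(comm_mxZ c^-1); rewrite scalerA mulVf // scale1r. Qed.

(* [N := c X - p p^T] is symmetric and [(1 - T) N = c S + c^2], so [T] commutes with [N],
   hence with [c S = (1 - T) N - c^2]. *)
Lemma sym_system_comm (R : comPzRingType) n (T S X : 'M[R]_n) (p y : 'cV[R]_n) (c : R) :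
  T^T = T -> S^T = S -> X^T = X ->
  p = T *m p + c *: y -> X = S + T *m X + c *: 1%:M + y *m p^T ->
  comm_mx T (c *: S).
Proof.
move=> sT sS sX hp hX.
have hy : (1%:M - T) *m p = c *: y by rewrite mulmxBl mul1mx {1}hp addrAC subrr add0r.
have hX' : (1%:M - T) *m X = S + c *: 1%:M + y *m p^T.
  by rewrite mulmxBl mul1mx {1}hX (addrAC S) (addrAC _ (T *m X)) addrK.
set N := c *: X - p *m p^T.
have NT : N^T = N by rewrite /N linearB /= linearZ /= sX trmx_mul trmxK.
have TN : (1%:M - T) *m N = c *: S + (c * c) *: 1%:M.
  rewrite /N mulmxBr -scalemxAr hX' mulmxA hy -scalemxAl.
  by rewrite !scalerDr scalerA addrK.
clearbody N.
have NT' : N *m (1%:M - T) = c *: S + (c * c) *: 1%:M.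
  by rewrite -[N]NT -[T]sT -trmx1 -linearB -trmx_mul TN linearD !linearZ /= sS trmx1.
have commT1T : comm_mx T (1%:M - T : 'M[R]_n).
  by rewrite /comm_mx mulmxBr mulmxBl mulmx1 mul1mx.
have commTN : comm_mx T N.
  by move: NT'; rewrite -TN mulmxBl mulmxBr mul1mx mulmx1 => /addrI /oppr_inj.
have -> : c *: S = (1%:M - T) *m N - (c * c) *: 1%:M by rewrite TN addrK.
apply: comm_mxD; first exact: comm_mxM.
exact/comm_mxN/comm_mxZ/comm_mx1.
Qed.

Lemma is_derive_mx_entry (R : realFieldType) (W : normedModType R) m n
    (M : W -> 'M[R]_(m, n)) (x v : W) (D : 'M[R]_(m, n)) i j :
  is_derive x v M D -> is_derive x v (fun z => M z i j) (D i j).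
Proof.
move=> [dM <-]; have /matrixP/(_ i j) := derive_mx dM; rewrite mxE => ->.
exact/derivableP/((derivable_mxP M x v).1 dM).
Qed.

Lemma is_derive_mulR (R : numFieldType) (W : normedModType R) (f g : W -> R)
    (x v : W) (df dg : R) :
  is_derive x v f df -> is_derive x v g dg ->
  is_derive x v (fun z => f z * g z) (f x * dg + g x * df).
Proof. by move=> fd gd; have := is_deriveM fd gd. Qed.

Lemma continuous_near_cst (R : realType) (f : R -> R) (x c : R) :
  {for x, continuous f} -> (\forall y \near x^', f y = c) -> f x = c.
Proof. by move=> /continuous_withinNx fx fc; exact: cvg_unique fx (cvg_near_cst c fc). Qed.

Lemma continuous_linear_cV_comp (R : realType) (T : topologicalType) (d : nat)
    (L : 'cV[R]_d -> R) (g : T -> 'cV[R]_d) (x : T) :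
  (forall u w, L (u + w) = L u + L w) -> (forall c u, L (c *: u) = c * L u) ->
  (forall k, {for x, continuous (fun s => g s k 0)}) ->
  {for x, continuous (L \o g)}.
Proof.
move=> LD LZ gc.
have L0 : L 0 = 0 by rewrite -(scale0r 0) LZ mul0r.
have -> : L \o g = \sum_(k < d) (fun s => g s k 0 * L (delta_mx k 0)).
  apply/funext => s; rewrite fct_sumE /= {1}(matrix_sum_delta (g s)).
  rewrite (big_morph L LD L0); apply: eq_bigr => k _.
  by rewrite big_ord1 LZ.
apply: (big_ind (fun h : T -> R => {for x, continuous h})) => //.
- exact: cst_continuous.
- by move=> f1 f2 c1 c2; apply: continuousD.
- by move=> k _; apply: continuousM => //; exact: cst_continuous.
Qed.

Lemma eq_near_witnesses (R : realType) (T : topologicalType) (g1 g2 : T -> R) (x : T) :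
  {for x, continuous g1} -> {for x, continuous g2} ->
  (forall P, nbhs x P -> exists p q, [/\ P p, P q & g1 p = g2 q]) ->
  g1 x = g2 x.
Proof.
move=> c1 c2 wit.
apply/eqP; rewrite -subr_eq0 -normr_le0; apply/ler_addgt0Pr => e e0; rewrite add0r.
have e20 : 0 < e / 2 by rewrite divr_gt0.
have n1 : \forall y \near x, `|g1 x - g1 y| < e / 2 by move: c1 => /cvgrPdist_lt; apply.
have n2 : \forall y \near x, `|g2 x - g2 y| < e / 2 by move: c2 => /cvgrPdist_lt; apply.
have [p [q [[d1 _] [_ d2] E]]] := wit _ (filterI n1 n2).
rewrite (splitr e); apply: le_trans (ler_distD (g1 p) _ _) _.
by rewrite -E distrC in d2; apply/ltW/ltrD.
Qed.

Section line_calculus.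
Context {R : realType} {V : normedModType R}.
Implicit Types (f g : V -> R) (x y z a b v : V).

Lemma is_derive_line f y v (s0 : R) :
  derivable f (y + s0 *: v) v ->
  is_derive s0 1 (fun s : R => f (y + s *: v)) ('D_v f (y + s0 *: v)).
Proof.
move=> df.
have E : (fun h : R => h^-1 *: (((fun s : R => f (y + s *: v)) \o shift s0) (h *: 1)
          - f (y + s0 *: v))) =
         (fun h : R => h^-1 *: ((f \o shift (y + s0 *: v)) (h *: v) - f (y + s0 *: v))).
  apply/funext => h /=; congr (_ *: (f _ - _)).
  by rewrite /shift /= scalerDl [h *: 1]mulr1 addrCA addrA.
apply: DeriveDef; first by rewrite /derivable E.
by rewrite /derive E.
Qed.

Lemma mvt_line_sub f g y z v (h : R) : 0 < h ->
  (forall s : R, 0 <= s <= h -> derivable f (y + s *: v) v /\ derivable g (z + s *: v) v) ->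
  exists2 c, 0 < c < h & (f (y + h *: v) - g (z + h *: v)) - (f y - g z)
    = ('D_v f (y + c *: v) - 'D_v g (z + c *: v)) * h.
Proof.
move=> h0 fgv.
pose u s := f (y + s *: v) - g (z + s *: v).
have du s : 0 <= s <= h ->
    is_derive s 1 u ('D_v f (y + s *: v) - 'D_v g (z + s *: v)).
  by case/fgv => dfv dgv; have := is_deriveB (is_derive_line dfv) (is_derive_line dgv).
have cu : {within `[0, h], continuous u}.
  apply: continuous_in_subspaceT => s; rewrite inE /= in_itv /= => /du [du_s _].
  exact/differentiable_continuous/derivable1_diffP.
have [c] := MVT h0 (fun s s0h => du s (subset_itv_oo_cc s0h)) cu.
by rewrite in_itv /u !scale0r !addr0 subr0 => c0h ->; exists c.
Qed.

Lemma mvt_line f y v (h : R) : 0 < h ->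
  (forall s : R, 0 <= s <= h -> derivable f (y + s *: v) v) ->
  exists2 c, 0 < c < h & f (y + h *: v) - f y = 'D_v f (y + c *: v) * h.
Proof.
move=> h0 fv; have [c c0h] := @mvt_line_sub f (cst 0) y y v h h0
   (fun s s0h => conj (fv s s0h) (derivable_cst 0 _ _)).
by rewrite derive_cst !subr0; exists c.
Qed.

Lemma double_difference_mvt f x a b (h : R) : 0 < h ->
  (forall s t : R, 0 <= s <= h -> 0 <= t <= h ->
     derivable f (x + s *: a + t *: b) a /\ derivable ('D_a f) (x + s *: a + t *: b) b) ->
  exists c1 c2 : R, [/\ 0 <= c1 <= h, 0 <= c2 <= h &
    f (x + h *: a + h *: b) - f (x + h *: a) - (f (x + h *: b) - f x)
      = 'D_b ('D_a f) (x + c1 *: a + c2 *: b) * h * h].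
Proof.
move=> h0 dfab.
have h0h : 0 <= h <= h by rewrite (ltW h0) lexx.
have zero0h : (0 : R) <= 0 <= h by rewrite lexx ltW.
have [|c1 /andP[c10 c1h]] := @mvt_line_sub f f (x + h *: b) x a h h0.
  move=> s s0h; split; first by rewrite addrAC; exact: (dfab s h s0h h0h).1.
  by have := (dfab s 0 s0h zero0h).1; rewrite scale0r addr0.
have c10h : 0 <= c1 <= h by rewrite !ltW.
have [c2 /andP[c20 c2h] E2] := @mvt_line ('D_a f) (x + c1 *: a) b h h0
  (fun t t0h => (dfab c1 t c10h t0h).2).
rewrite (addrAC x (h *: b)) (addrAC x (h *: b) (c1 *: a)) E2 => E.
by exists c1, c2; rewrite !ltW // -E (addrAC x (h *: a)).
Qed.

Lemma near_square (P : set V) x a b : (\forall y \near x, P y) ->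
  exists2 h : R, 0 < h &
    forall s t : R, 0 <= s <= h -> 0 <= t <= h -> P (x + s *: a + t *: b).
Proof.
move=> /nbhs_ballP [r /= r0 Pr].
have K0 : 0 < `|a| + `|b| + 1 by rewrite ltr_wpDl // addr_ge0.
exists (r / (`|a| + `|b| + 1)) => [|s t /andP[s0 sh] /andP[t0 th]]; first exact: divr_gt0.
apply: Pr; rewrite -ball_normE /ball_ /=.
have -> : x - (x + s *: a + t *: b) = - (s *: a + t *: b).
  by rewrite -addrA opprD addrA subrr add0r.
rewrite normrN (le_lt_trans (ler_normD _ _)) // !normrZ !ger0_norm //.
have na := normr_ge0 a; have nb := normr_ge0 b.
have : s * `|a| <= r / (`|a| + `|b| + 1) * `|a| by rewrite ler_wpM2r.
have : t * `|b| <= r / (`|a| + `|b| + 1) * `|b| by rewrite ler_wpM2r.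
have : r / (`|a| + `|b| + 1) * (`|a| + `|b| + 1) = r by rewrite divfK ?gt_eqF.
have : 0 < r / (`|a| + `|b| + 1) by rewrite divr_gt0.
nra.
Qed.

Lemma schwarz f (U : set V) x a b : open U -> U x ->
  (forall y, U y -> [/\ derivable f y a, derivable f y b,
                      derivable ('D_a f) y b & derivable ('D_b f) y a]) ->
  {for x, continuous ('D_b ('D_a f))} -> {for x, continuous ('D_a ('D_b f))} ->
  'D_b ('D_a f) x = 'D_a ('D_b f) x.
Proof.
move=> oU Ux dU cab cba; apply: (eq_near_witnesses cab cba) => P Px.
have nU : nbhs x U by apply: open_nbhs_nbhs; split.
have [h h0 Ph] := near_square a b (filterI nU Px).
have [|c1 [c2 [c1h c2h Eab]]] := @double_difference_mvt f x a b h h0.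
  by move=> s t sh th; have [/dU[]] := Ph s t sh th.
have swap (s t : R) : x + s *: b + t *: a = x + t *: a + s *: b by rewrite addrAC.
have [|c3 [c4 [c3h c4h Eba]]] := @double_difference_mvt f x b a h h0.
  by move=> s t sh th; rewrite (swap s t); have [/dU[]] := Ph t s th sh.
rewrite (swap c3 c4) (swap h h) in Eba.
have hn : h != 0 by rewrite gt_eqF.
have Dsym : f (x + h *: a + h *: b) - f (x + h *: a) - (f (x + h *: b) - f x)
          = f (x + h *: a + h *: b) - f (x + h *: b) - (f (x + h *: a) - f x) by ring.
move: (etrans (esym Eab) (etrans Dsym Eba)) => /(mulIf hn) /(mulIf hn) E.
have [_ Pp] := Ph c1 c2 c1h c2h; have [_ Pq] := Ph c4 c3 c4h c3h.
exists (x + c1 *: a + c2 *: b), (x + c4 *: a + c3 *: b); exact: And3 Pp Pq E.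
Qed.
End line_calculus.

Section Acomb.
Variables (R : realType) (d : nat) (alpha : 'I_d -> 'I_d -> 'I_d -> R).
Local Notation V := 'cV[R]_d.
Implicit Types u v w : V.

(* [Acomb v] is the paper's [\sum_k v_k A_k] (see Acomb_ebasis). *)
Definition Acomb v : 'M[R]_d := \matrix_(i, k) \sum_(j < d) alpha i j k * v j 0.

Fact Acomb_is_linear : linear Acomb.
Proof.
move=> c u w; apply/matrixP => i k; rewrite !mxE mulr_sumr -big_split.
by apply: eq_bigr => j _; rewrite !mxE mulrDr mulrCA.
Qed.

HB.instance Definition _ := GRing.isLinear.Build R V 'M[R]_d _ Acomb Acomb_is_linear.

Lemma mulmx_AcombE v m (P : 'M[R]_(d, m)) i c :
  (Acomb v *m P) i c = \sum_(j < d) \sum_(k < d) alpha i j k * v j 0 * P k c.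
Proof.
rewrite mxE exchange_big; apply: eq_bigr => k _.
by rewrite mxE mulr_suml.
Qed.

Hypotheses (alphaC12 : forall i j k, alpha i j k = alpha j i k)
           (alphaC23 : forall i j k, alpha i j k = alpha i k j).

Lemma alphaC13 i j k : alpha i j k = alpha k j i.
Proof. by rewrite alphaC12 alphaC23 alphaC12. Qed.

Lemma alphaCr i j k : alpha i j k = alpha k i j.
Proof. by rewrite (alphaC12 i) (alphaC23 j) (alphaC12 j) (alphaC23 k). Qed.

Lemma Acomb_sym v : (Acomb v)^T = Acomb v.
Proof. by apply/matrixP => i k; rewrite !mxE; apply: eq_bigr => j _; rewrite alphaC13. Qed.

Lemma AcombC v i j : Acomb v i j = Acomb v j i.
Proof. by rewrite !mxE; apply: eq_bigr => k _; rewrite alphaC13. Qed.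

Lemma Acomb_mulC u w : Acomb u *m w = Acomb w *m u.
Proof.
apply/matrixP => i c; rewrite (ord1 c) !mulmx_AcombE exchange_big; apply: eq_bigr => k _.
by apply: eq_bigr => j _; rewrite alphaC23 mulrAC.
Qed.

Lemma Acomb_ebasis k : Acomb (ebasis k) = Amat alpha k.
Proof.
apply/matrixP => i l; rewrite !mxE (bigD1 k) //= big1 => [|j /negbTE jk].
  by rewrite !mxE !eqxx mulr1 addr0 alphaC12.
by rewrite !mxE jk mulr0.
Qed.

Lemma Acomb_ebasis_dot u w k l :
  ((Acomb (ebasis k) *m Acomb (ebasis l) *m u)^T *m w) 0 0 = (Acomb w *m Acomb u) k l.
Proof.
rewrite -mulmxA (Acomb_mulC (ebasis l)) !trmx_mul !Acomb_sym.
rewrite -(mulmxA _ (Acomb (ebasis k))) (Acomb_mulC (ebasis k)) !mulmxA.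
rewrite trmx_delta -rowE -colE !mxE; apply: eq_bigr => j _.
by rewrite mxE mulrC AcombC (AcombC u).
Qed.

Lemma mulmx_Acomb_tr u w i j : (Acomb u *m Acomb w) i j = (Acomb w *m Acomb u) j i.
Proof.
have := congr1 (fun M : 'M[R]_d => M j i) (trmx_mul (Acomb u) (Acomb w)).
by rewrite !Acomb_sym /= mxE.
Qed.

Lemma Cmat_dotE u w a b :
  ((Cmat alpha a b *m u)^T *m w) 0 0 = (Acomb w *m Acomb u - Acomb u *m Acomb w) a b.
Proof.
rewrite /Cmat -!Acomb_ebasis mulmxBl linearB mulmxBl !mxentryB !Acomb_ebasis_dot.
by rewrite (mulmx_Acomb_tr w u b a).
Qed.

Lemma cubic_polarE u w :
  \sum_(i < d) \sum_(j < d) \sum_(k < d)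
     alpha i j k * (w i 0 * u j 0 * u k 0 + u i 0 * w j 0 * u k 0 + u i 0 * u j 0 * w k 0)
  = 3 * (w^T *m (Acomb u *m u)) 0 0.
Proof.
set S := (w^T *m _) 0 0.
have E1 : \sum_(i < d) \sum_(j < d) \sum_(k < d) alpha i j k * (w i 0 * u j 0 * u k 0) = S.
  rewrite /S mxE; apply: eq_bigr => i _; rewrite mulmx_AcombE [w^T 0 i]mxE mulr_sumr.
  by apply: eq_bigr => j _; rewrite mulr_sumr; apply: eq_bigr => k _; ring.
have E2 : \sum_(i < d) \sum_(j < d) \sum_(k < d) alpha i j k * (u i 0 * w j 0 * u k 0) = S.
  rewrite -E1 exchange_big; apply: eq_bigr => j _; apply: eq_bigr => i _.
  by apply: eq_bigr => k _; rewrite (alphaC12 i j k); ring.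
have E3 : \sum_(i < d) \sum_(j < d) \sum_(k < d) alpha i j k * (u i 0 * u j 0 * w k 0) = S.
  under eq_bigr => i _ do rewrite exchange_big.
  rewrite -E1 exchange_big; apply: eq_bigr => k _; apply: eq_bigr => i _.
  by apply: eq_bigr => j _; rewrite (alphaCr i j k); ring.
have -> : 3 * S = S + S + S by ring.
rewrite -[X in X + _ + _]E1 -[X in _ + X + _]E2 -[X in _ + X]E3.
rewrite -!big_split; apply: eq_bigr => i _; rewrite -!big_split; apply: eq_bigr => j _.
by rewrite -!big_split; apply: eq_bigr => k _; rewrite !mulrDr.
Qed.

Lemma is_derive_Fcubic (W : normedModType R) (t : W -> V) (x v : W) (w : V) :
  is_derive x v t w ->
  is_derive x v (Fcubic alpha \o t) (3 * (w^T *m (Acomb (t x) *m t x)) 0 0).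
Proof.
move=> dt.
have dtk k : is_derive x v (fun z => t z k 0) (w k 0) := is_derive_mx_entry k 0 dt.
have dcube i j k : is_derive x v (fun z => alpha i j k * t z i 0 * t z j 0 * t z k 0)
   (alpha i j k * (w i 0 * t x j 0 * t x k 0 + t x i 0 * w j 0 * t x k 0
                   + t x i 0 * t x j 0 * w k 0)).
  apply: is_derive_eq (is_derive_mulR (is_derive_mulR (is_derive_mulR
    (is_derive_cst (alpha i j k) x v) (dtk i)) (dtk j)) (dtk k)) _.
  by rewrite /cst; ring.
have -> : Fcubic alpha \o t =
    \sum_(i < d) \sum_(j < d) \sum_(k < d) (fun z => alpha i j k * t z i 0 * t z j 0 * t z k 0).
  apply/funext => z; rewrite /= /Fcubic fct_sumE; apply: eq_bigr => i _.
  by rewrite fct_sumE; apply: eq_bigr => j _; rewrite fct_sumE.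
rewrite -cubic_polarE.
by do 3!apply: is_derive_sum => ?.
Qed.
End Acomb.

Section pde.
Variables (R : realType) (d : nat) (alpha : 'I_d -> 'I_d -> 'I_d -> R).
Variables (phi : 'cV[R]_d -> R) (U : set 'cV[R]_d).
Local Notation V := 'cV[R]_d.
Local Notation Acomb := (Acomb alpha).
Hypotheses (alphaC12 : forall i j k, alpha i j k = alpha j i k)
           (alphaC23 : forall i j k, alpha i j k = alpha i k j)
           (oU : open U) (phiC2 : C2_on U phi)
           (phi_pde : forall x, U x -> forall i : 'I_d, partial phi i x =
              \sum_(j < d) \sum_(k < d) alpha i j k * x j 0 * partial phi k x + x i 0 * phi x).

Definition grad y : V := \col_k partial phi k y.
Definition hessian y : 'M[R]_d := \matrix_(i, j) partial (partial phi i) j y.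

Lemma grad_eq y : U y -> grad y = Acomb y *m grad y + phi y *: y.
Proof.
move=> Uy; apply/matrixP => i c; rewrite (ord1 c) [in RHS]mxE mulmx_AcombE !mxE phi_pde //.
by rewrite mulrC; congr (_ + _); apply: eq_bigr => j _; apply: eq_bigr => k _; rewrite mxE.
Qed.

Lemma hessian_sym y : U y -> (hessian y)^T = hessian y.
Proof.
move=> Uy; apply/matrixP => i j; rewrite !mxE.
have [_ _ _ _ c2] := phiC2 Uy.
apply: schwarz oU Uy _ (c2 j i) (c2 i j) => z /phiC2[_ dphi _ dpartial _].
by split; [exact: dphi | exact: dphi | exact: dpartial | exact: dpartial].
Qed.

Lemma hessian_eq y : U y ->
  hessian y = Acomb (grad y) + Acomb y *m hessian y + phi y *: 1%:M + y *m (grad y)^T.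
Proof.
move=> Uy; have [_ dphi _ dpartial _] := phiC2 Uy.
apply/matrixP => i j; pose e : V := ebasis j.
have nU : nbhs y U by apply: open_nbhs_nbhs.
have pde_near : \forall z \near y,
    \sum_(k < d) Acomb z i k * partial phi k z + z i 0 * phi z = partial phi i z.
  apply: filterS nU => z Uz; rewrite phi_pde // exchange_big; congr (_ + _).
  by apply: eq_bigr => k _; rewrite mxE mulr_suml.
have dcoord m : is_derive y e (fun z : V => z m 0) (e m 0).
  exact: is_derive_mx_entry (is_derive_id y e).
have dAcomb k : is_derive y e (fun z => Acomb z i k) (Acomb e i k).
  have -> : (fun z => Acomb z i k) = \sum_(m < d) (fun z : V => alpha i m k * z m 0).
    by apply/funext => z; rewrite fct_sumE mxE.
  by rewrite mxE; apply: is_derive_sum.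
have drhs :
    is_derive y e (fun z => \sum_(k < d) Acomb z i k * partial phi k z + z i 0 * phi z)
    (\sum_(k < d) (Acomb y i k * hessian y k j + partial phi k y * Acomb e i k)
     + (y i 0 * partial phi j y + phi y * e i 0)).
  have -> : (fun z => \sum_(k < d) Acomb z i k * partial phi k z + z i 0 * phi z) =
      \sum_(k < d) (fun z => Acomb z i k * partial phi k z) + (fun z => z i 0 * phi z).
    by apply/funext => z; rewrite /= fct_sumE.
  apply: is_deriveD; last exact: is_derive_mulR (dcoord i) (derivableP (dphi j)).
  apply: is_derive_sum => k; rewrite [hessian y k j]mxE.
  exact: is_derive_mulR (dAcomb k) (derivableP (dpartial k j)).
have [_ Dij] := near_eq_is_derive pde_near drhs.
transitivity ('D_e (partial phi i) y); first by rewrite mxE.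
have Ae : \sum_(k < d) partial phi k y * Acomb e i k = Acomb (grad y) i j.
  have := congr1 (fun M : 'cV[R]_d => M i 0) (Acomb_mulC alphaC23 e (grad y)).
  rewrite /e -colE /= [col _ _ i 0]mxE [(Acomb _ *m _) i 0]mxE => <-.
  by apply: eq_bigr => k _; rewrite [grad y k 0]mxE mulrC.
rewrite Dij big_split /= !mxentryD Ae [(Acomb y *m hessian y) i j]mxE.
rewrite [(y *m _) i j]mxE big_ord1 [_^T 0 j]mxE [grad y j 0]mxE !mxE eqxx andbT.
ring.
Qed.

Lemma comm_grad y : U y -> phi y != 0 -> comm_mx (Acomb y) (Acomb (grad y)).
Proof.
move=> Uy phiy; apply: comm_mxZK phiy _.
exact: sym_system_comm (Acomb_sym alphaC12 alphaC23 y) (Acomb_sym alphaC12 alphaC23 (grad y))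
  (hessian_sym Uy) (grad_eq Uy) (hessian_eq Uy).
Qed.

(* Substitute [grad (s x) = s (A(x) grad (s x) + phi (s x) x)] twice into comm_grad. *)
Lemma comm_ray x s : s != 0 -> U (s *: x) -> phi (s *: x) != 0 ->
  comm_mx (Acomb x)
    (Acomb (Acomb x *m (Acomb x *m grad (s *: x))) + phi (s *: x) *: Acomb (Acomb x *m x)).
Proof.
move=> s0 Usx phis; set T := Acomb x; set p := grad (s *: x); set f := phi (s *: x).
have hp : p = s *: (T *m p + f *: x).
  rewrite {1}/p (grad_eq Usx) -/p -/f linearZ /= -/T -scalemxAl scalerDr.
  by rewrite !scalerA mulrC.
have commTp : comm_mx T (Acomb p).
  by apply/comm_mx_sym/(comm_mxZK s0)/comm_mx_sym; rewrite -linearZ; exact: comm_grad.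
have commTTp : comm_mx T (Acomb (T *m p)).
  move: commTp; rewrite {1}hp linearZ linearD linearZ /= => /(comm_mxZK s0).
  exact: comm_mxDK (comm_mxZ f (comm_mx_refl T)).
move: commTTp; rewrite {1}hp -scalemxAr mulmxDr -scalemxAr linearZ linearD linearZ /=.
exact: comm_mxZK.
Qed.

Lemma grad0 : U 0 -> grad 0 = 0.
Proof. by move=> U0; rewrite (grad_eq U0) linear0 mul0mx scaler0 addr0. Qed.

(* The [(a, b)] entry of the commutator in comm_ray is continuous in [s] and vanishes for
   small [s != 0]; at [s = 0] it is [phi 0] times the wanted entry, as [grad 0 = 0]. *)
Lemma comm_Acomb_cubic x : U 0 -> phi 0 != 0 -> comm_mx (Acomb x) (Acomb (Acomb x *m x)).
Proof.
move=> U0 phi0; set T := Acomb x.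
apply/matrixP => a b; apply/eqP; rewrite -subr_eq0 -mxentryB; apply/eqP.
pose br (M : 'M[R]_d) := (T *m M - M *m T) a b.
have brD M N : br (M + N) = br M + br N.
  by rewrite /br mulmxDr mulmxDl opprD addrACA; apply: mxentryD.
have brZ c M : br (c *: M) = c * br M by rewrite /br -scalemxAl -scalemxAr -scalerBr mxentryZ.
have br_comm M : comm_mx T M -> br M = 0 by rewrite /br => ->; rewrite subrr mxE.
pose L v := br (Acomb (T *m (T *m v))).
have LD u w : L (u + w) = L u + L w by rewrite /L !mulmxDr linearD brD.
have LZ c u : L (c *: u) = c * L u by rewrite /L -!scalemxAr linearZ brZ.
pose f s := phi (s *: x) * br (Acomb (T *m x)) + L (grad (s *: x)).
have [c_phi _ c_grad _ _] := phiC2 U0.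
have ray_cont (g : V -> R) :
    {for 0, continuous g} -> {for 0, continuous (fun s : R => g (s *: x))}.
  by move=> gc; apply: continuous_comp; [exact: scalel_continuous | rewrite /= scale0r].
have f_cont : {for 0, continuous f}.
  apply: continuousD; first by apply: continuousM; [exact: ray_cont | exact: cst_continuous].
  apply: (continuous_linear_cV_comp LD LZ) => k.
  have -> : (fun s => grad (s *: x) k 0) = (fun s => partial phi k (s *: x)).
    by apply/funext => s; rewrite mxE.
  exact: ray_cont.
have f_near : \forall s \near 0^', f s = 0.
  have nU : nbhs (0 : V) U by apply: open_nbhs_nbhs.
  have n1 : \forall s \near 0^', U (s *: x) by apply: nbhs_dnbhs; exact: near0Z.
  have n2 : \forall s \near 0^', phi (s *: x) != 0.
    apply: nbhs_dnbhs; apply: (@near0Z _ _ x (fun y => phi y != 0)).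
    exact: (cvgr_neq0 _ c_phi phi0).
  apply: filterS (filterI (filterI (nbhs_dnbhs_neq (0 : R)) n1) n2) => s [[s0 Us] phis].
  by rewrite /f -[RHS](br_comm _ (comm_ray s0 Us phis)) brD brZ addrC.
have L0 : L 0 = 0 by rewrite -(scale0r 0) LZ mul0r.
have := continuous_near_cst f_cont f_near.
by rewrite /f scale0r grad0 // L0 addr0 => /eqP; rewrite mulf_eq0 (negbTE phi0) => /eqP.
Qed.
End pde.

Theorem mainTheorem9 (R : realType) (d : nat) (alpha : 'I_d -> 'I_d -> 'I_d -> R)
  (Hsym : forall i j k, [/\ alpha i j k = alpha j i k, alpha i j k = alpha i k j,
                            alpha i j k = alpha k j i, alpha i j k = alpha j k i &
                            alpha i j k = alpha k i j])
  (phi : 'cV[R]_d -> R) (U : set 'cV[R]_d)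
  (HUo : open U) (HU0 : U 0)
  (HC2 : C2_on U phi)
  (Hpde : forall x, U x -> forall i : 'I_d,
     partial phi i x =
       \sum_(j < d) \sum_(k < d) alpha i j k * x j 0 * partial phi k x + x i 0 * phi x)
  (Hphi0 : phi 0 != 0) :
  forall (i j : 'I_d) (xi : 'cV[R]_d) (t : R -> 'cV[R]_d),
    t 0 = xi ->
    (forall s : R, is_derive s 1 t (Cmat alpha i j *m t s)) ->
    forall s : R, Fcubic alpha (t s) = Fcubic alpha xi.
Proof.
move=> i j xi t t0 dt s.
have [C12 C23] : (forall i j k, alpha i j k = alpha j i k) /\
                 (forall i j k, alpha i j k = alpha i k j).
  by split=> a b c; have [] := Hsym a b c.
rewrite -t0; apply: (@is_derive_0_is_cst R (Fcubic alpha \o t)) => r.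
apply: is_derive_eq (is_derive_Fcubic C12 C23 (dt r)) _.
by rewrite Cmat_dotE // (comm_Acomb_cubic C12 C23 HUo HC2 Hpde _ HU0 Hphi0) subrr mxE mulr0.
Qed.
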